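(* For all integers $m,n\geq 1$, \[p^{od}_{ed}(2m-1,2n)=p^{od}_{ed}(2m-1,2n-1).\]
   Context: $\mathcal{P}^{od}_{ed}$ is the set of integer partitions whose parts are all distinct and such that every even part is smaller than every odd part. Partitions consisting only of odd parts, or only of even parts, are allowed. $p^{od}_{ed}(m,n)$ is the number of partitions of $n$ in $\mathcal{P}^{od}_{ed}$ with exactly $m$ parts. *)

From mathcomp Require Import all_boot.
Set Implicit Arguments. Unset Strict Implicit. Unset Printing Implicit Defensive.

(* A partition into distinct parts is identified with its set of parts.
   Every part of a partition of n lies in {1,...,n}, so a partition of n into
   distinct parts is a set A of elements of 'I_(n.+1) with 0 \notin A and
   \sum_(i in A) i = n; its number of parts is #|A|. *)

Definition pod_ed_set (k : nat) (A : {set 'I_k}) : bool :=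
  [forall i in A, 0 < (i : nat)] &&
  [forall e in A, forall o in A, (~~ odd e && odd o) ==> (e < o)].

Definition p_od_ed (m n : nat) : nat :=
  #|[set A : {set 'I_n.+1} |
      [&& pod_ed_set A, \sum_(i in A) (i : nat) == n & #|A| == m]]|.

From mathcomp Require Import all_boot zify.

(* Fix an odd number k of parts and an odd total s.  A set A in
   P^{od}_{ed} with k parts and sum s+1 has an even part (an odd number of odd
   parts would make the sum odd).  Lowering its largest even part e to e-1
   gives a set in P^{od}_{ed} with k parts and sum s, in which e-1 is the
   smallest odd part: e-1 is below every odd part of A, and above every other
   even part.  Conversely a set of sum s has an odd part (the sum is odd), and
   raising its smallest odd part o to o+1 undoes the lowering.  Hence the two
   classes are equinumerous. *)

Set Implicit Arguments.
Unset Strict Implicit.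
Unset Printing Implicit Defensive.

Section MovePart.
Variables (T : finType) (A : {set T}) (x y : T).
Hypotheses (xA : x \in A) (yA : y \notin A).

Lemma card_move : #|y |: A :\ x| = #|A|.
Proof.
by rewrite cardsU1 !inE negb_and yA orbT (cardsD1 x A) xA.
Qed.

Lemma sum_move (F : T -> nat) :
  \sum_(i in y |: A :\ x) F i + F x = \sum_(i in A) F i + F y.
Proof.
have yAx : y \notin A :\ x by rewrite !inE negb_and yA orbT.
by rewrite big_setU1 //= (big_setD1 x xA) /=; lia.
Qed.

Lemma moveK : x |: ((y |: A :\ x) :\ y) = A.
Proof.
apply/setP => z; rewrite !inE.
case: (eqVneq z x) => [->|_]; first by rewrite xA; case: (_ == y).
by case: (eqVneq z y) => [->|]; rewrite ?(negbTE yA).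
Qed.
End MovePart.

Lemma odd_sum (T : finType) (A : {set T}) (F : T -> nat) :
  odd (\sum_(i in A) F i) = odd #|[set i in A | odd (F i)]|.
Proof.
have -> : \sum_(i in A) F i = \sum_(i in A) (odd (F i) + (F i)./2 * 2).
  by apply: eq_bigr => i _; rewrite muln2 odd_double_half.
rewrite big_split /= -big_distrl /= oddD oddM andbF addbF.
rewrite -sum1_card big_mkcond [in RHS]big_mkcond /=.
by congr (odd _); apply: eq_bigr => i _; rewrite !inE; case: (i \in A); case: odd.
Qed.

Lemma even_part_exists K (A : {set 'I_K}) :
  odd #|A| -> ~~ odd (\sum_(i in A) (i : nat)) -> exists2 x, x \in A & ~~ odd x.
Proof.
move=> oddA even_sum; apply/exists_inP; apply: contraNT even_sum => /exists_inPn noeven.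
rewrite odd_sum; suff -> : [set i in A | odd i] = A by [].
by apply/setP => i; rewrite inE; apply/andb_idr => /noeven; rewrite negbK.
Qed.

Lemma odd_part_exists K (A : {set 'I_K}) :
  odd (\sum_(i in A) (i : nat)) -> exists2 x, x \in A & odd x.
Proof.
move=> odd_sum_A; apply/exists_inP; apply: contraTT odd_sum_A => /exists_inPn noodd.
rewrite odd_sum; suff -> : [set i in A | odd i] = set0 by rewrite cards0.
by apply/setP => i; rewrite !inE; apply/negP => /andP [/noodd/negP].
Qed.

Lemma part_le_sum K (A : {set 'I_K}) (x : 'I_K) : x \in A -> x <= \sum_(i in A) (i : nat).
Proof. by move=> xA; rewrite (big_setD1 x xA) /= leq_addr. Qed.

Section Extremal.
Variables (K : nat) (P : {set 'I_K}).

Definition greatest (e : 'I_K) : bool := (e \in P) && [forall x in P, x <= e].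
Definition least (o : 'I_K) : bool := (o \in P) && [forall x in P, o <= x].

Lemma greatestP e : reflect (e \in P /\ forall x, x \in P -> x <= e) (greatest e).
Proof.
apply: (iffP andP) => [[eP /forall_inP]|[eP ub]]; first by split.
by split=> //; apply/forall_inP.
Qed.

Lemma leastP o : reflect (o \in P /\ forall x, x \in P -> o <= x) (least o).
Proof.
apply: (iffP andP) => [[oP /forall_inP]|[oP lb]]; first by split.
by split=> //; apply/forall_inP.
Qed.

Lemma greatest_exists x : x \in P -> exists e, greatest e.
Proof.
move=> xP; case: (@arg_maxnP _ x (mem P) val xP) => e eP ub.
by exists e; apply/greatestP; split=> // y /ub.
Qed.

Lemma least_exists x : x \in P -> exists o, least o.
Proof.
move=> xP; case: (@arg_minnP _ x (mem P) val xP) => o oP lb.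
by exists o; apply/leastP; split=> // y /lb.
Qed.

(* The greatest (least) element is unique, hence it is the one picked. *)
Lemma pick_greatest e : greatest e -> [pick x | greatest x] = Some e.
Proof.
move=> /greatestP [eP ub]; case: pickP => [x /greatestP [xP ubx]|/(_ e)].
  by congr Some; apply/val_inj/anti_leq; rewrite ub ?ubx.
by move=> /negP; case; apply/greatestP.
Qed.

Lemma pick_least o : least o -> [pick x | least x] = Some o.
Proof.
move=> /leastP [oP lb]; case: pickP => [x /leastP [xP lbx]|/(_ o)].
  by congr Some; apply/val_inj/anti_leq; rewrite lb ?lbx.
by move=> /negP; case; apply/leastP.
Qed.
End Extremal.

Definition even_parts K (A : {set 'I_K}) : {set 'I_K} := [set i in A | ~~ odd i].
Definition odd_parts K (A : {set 'I_K}) : {set 'I_K} := [set i in A | odd i].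

Lemma podP K (A : {set 'I_K}) :
  reflect ((forall i, i \in A -> 0 < (i : nat)) /\
           (forall e o, e \in A -> o \in A -> ~~ odd e -> odd o -> (e : nat) < o))
          (pod_ed_set A).
Proof.
apply: (iffP andP) => [[/forall_inP pos /forall_inP ord]|[pos ord]]; split=> //.
- by move=> e o eA oA ee oo; move: (ord e eA) => /forall_inP/(_ o oA); rewrite ee oo.
- exact/forall_inP.
- apply/forall_inP => e eA; apply/forall_inP => o oA.
  by apply/implyP => /andP [ee oo]; apply: ord.
Qed.

Section LowerRaise.
Variable N : nat.
Implicit Types A B : {set 'I_N.+1}.

Definition lower A : {set 'I_N.+1} :=
  if [pick e | greatest (even_parts A) e] is Some e then inord e.-1 |: A :\ e else A.

Definition raise B : {set 'I_N.+1} :=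
  if [pick o | least (odd_parts B) o] is Some o then inord o.+1 |: B :\ o else B.

Lemma val_inord_pred (e : 'I_N.+1) : (inord e.-1 : 'I_N.+1) = e.-1 :> nat.
Proof. by rewrite inordK //; have := ltn_ord e; lia. Qed.

Lemma val_inord_succ (o : 'I_N.+1) : o < N -> (inord o.+1 : 'I_N.+1) = o.+1 :> nat.
Proof. by move=> o_lt; rewrite inordK. Qed.

Section Lowering.
Variables (A : {set 'I_N.+1}) (e : 'I_N.+1).
Hypotheses (podA : pod_ed_set A) (maxe : greatest (even_parts A) e).
Local Notation e' := (inord e.-1 : 'I_N.+1).

Let eA : e \in A. Proof. by case/greatestP: maxe; rewrite inE => /andP []. Qed.
Let even_e : ~~ odd e. Proof. by case/greatestP: maxe; rewrite inE => /andP []. Qed.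
Let even_le x : x \in A -> ~~ odd x -> x <= e.
Proof. by move=> xA ox; case/greatestP: maxe => _; apply; rewrite inE xA. Qed.
Let pos : forall i, i \in A -> 0 < (i : nat). Proof. by case/podP: podA. Qed.
Let ord : forall a b, a \in A -> b \in A -> ~~ odd a -> odd b -> (a : nat) < b.
Proof. by case/podP: podA. Qed.

Lemma lowered_notin : e' \notin A.
Proof.
apply/negP => e'A; have := ord eA e'A even_e; rewrite val_inord_pred.
have := pos eA; lia.
Qed.

Lemma lower_pod : pod_ed_set (e' |: A :\ e).
Proof.
have epos := pos eA; apply/podP; split=> [i|a b]; rewrite !inE.
  by case/orP => [/eqP ->|/andP [_ /pos //]]; rewrite val_inord_pred; lia.
case/orP => [/eqP ->|/andP [ae aA]]; first by rewrite val_inord_pred; lia.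
case/orP => [/eqP ->|/andP [_ bA]] oa ob; last exact: ord.
have ha : (a : nat) != e by apply: contraNneq ae => /val_inj ->.
by have := even_le aA oa; rewrite val_inord_pred; lia.
Qed.

Lemma lower_least : least (odd_parts (e' |: A :\ e)) e'.
Proof.
have epos := pos eA; apply/leastP; split.
  by rewrite !inE eqxx val_inord_pred /=; lia.
move=> b; rewrite !inE => /andP [/orP [/eqP ->//|/andP [_ bA]] ob].
by have := ord eA bA even_e ob; rewrite val_inord_pred; lia.
Qed.
End Lowering.

Section Raising.
Variables (B : {set 'I_N.+1}) (o : 'I_N.+1).
Hypotheses (podB : pod_ed_set B) (mino : least (odd_parts B) o) (o_lt : o < N).
Local Notation o' := (inord o.+1 : 'I_N.+1).

Let oB : o \in B. Proof. by case/leastP: mino; rewrite inE => /andP []. Qed.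
Let odd_o : odd o. Proof. by case/leastP: mino; rewrite inE => /andP []. Qed.
Let odd_ge x : x \in B -> odd x -> o <= x.
Proof. by move=> xB ox; case/leastP: mino => _; apply; rewrite inE xB. Qed.
Let val_raised : (o' : nat) = o.+1. Proof. exact: val_inord_succ. Qed.
Let pos : forall i, i \in B -> 0 < (i : nat). Proof. by case/podP: podB. Qed.
Let ord : forall a b, a \in B -> b \in B -> ~~ odd a -> odd b -> (a : nat) < b.
Proof. by case/podP: podB. Qed.

Lemma raised_notin : o' \notin B.
Proof.
apply/negP => o'B; have := ord o'B oB; rewrite val_raised /= odd_o.
by move=> /(_ isT isT); lia.
Qed.

Lemma raise_pod : pod_ed_set (o' |: B :\ o).
Proof.
apply/podP; split=> [i|a b]; rewrite !inE.
  by case/orP => [/eqP ->|/andP [_ /pos //]]; rewrite val_raised.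
move=> ha; case/orP => [/eqP ->|/andP [bo bB]]; first by rewrite val_raised /= odd_o.
case/orP: ha => [/eqP ->|/andP [_ aB]] oa ob; last exact: ord.
have hb : (b : nat) != o by apply: contraNneq bo => /val_inj ->.
by have := odd_ge bB ob; rewrite val_raised; lia.
Qed.

Lemma raise_greatest : greatest (even_parts (o' |: B :\ o)) o'.
Proof.
apply/greatestP; split; first by rewrite !inE eqxx val_raised /= odd_o.
move=> a; rewrite !inE => /andP [/orP [/eqP ->//|/andP [_ aB]] oa].
by have := ord aB oB oa odd_o; rewrite val_raised; lia.
Qed.
End Raising.

Lemma lowerE A e : greatest (even_parts A) e -> lower A = inord e.-1 |: A :\ e.
Proof. by move=> maxe; rewrite /lower (pick_greatest maxe). Qed.

Lemma raiseE B o : least (odd_parts B) o -> raise B = inord o.+1 |: B :\ o.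
Proof. by move=> mino; rewrite /raise (pick_least mino). Qed.

Lemma lower_spec A x : pod_ed_set A -> x \in A -> ~~ odd x ->
  [/\ pod_ed_set (lower A), #|lower A| = #|A|,
      (\sum_(i in lower A) (i : nat)).+1 = \sum_(i in A) (i : nat) & raise (lower A) = A].
Proof.
move=> podA xA ox; have [e maxe] : exists e, greatest (even_parts A) e.
  by apply: (greatest_exists (x := x)); rewrite inE xA.
have eA : e \in A by case/greatestP: maxe; rewrite inE => /andP [].
have epos : 0 < (e : nat) by case/podP: podA => pos _; apply: pos.
have e'A := lowered_notin podA maxe.
rewrite (lowerE maxe); split.
- exact: lower_pod.
- exact: card_move.
- have := sum_move eA e'A (@nat_of_ord _); rewrite val_inord_pred.
  by move: (\sum_(i in _ |: _) _) (\sum_(i in A) _) => S S0; lia.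
- rewrite (raiseE (lower_least podA maxe)).
  have -> : inord (inord e.-1 : 'I_N.+1).+1 = e.
    by apply: val_inj; rewrite val_inord_pred prednK // inord_val.
  exact: moveK.
Qed.

Lemma raise_spec B x : pod_ed_set B -> x \in B -> odd x -> \sum_(i in B) (i : nat) < N ->
  [/\ pod_ed_set (raise B), #|raise B| = #|B|,
      \sum_(i in raise B) (i : nat) = (\sum_(i in B) (i : nat)).+1 & lower (raise B) = B].
Proof.
move=> podB xB ox sumB; have [o mino] : exists o, least (odd_parts B) o.
  by apply: (least_exists (x := x)); rewrite inE xB.
have oB : o \in B by case/leastP: mino; rewrite inE => /andP [].
have o_lt : o < N by apply: leq_ltn_trans sumB; apply: part_le_sum.
have o'B := raised_notin podB mino o_lt.
rewrite (raiseE mino); split.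
- exact: raise_pod.
- exact: card_move.
- have := sum_move oB o'B (@nat_of_ord _); rewrite val_inord_succ //.
  by move: (\sum_(i in _ |: _) _) (\sum_(i in B) _) => S S0; lia.
- rewrite (lowerE (raise_greatest podB mino o_lt)) val_inord_succ // inord_val.
  exact: moveK.
Qed.
End LowerRaise.
Arguments lower {N}.
Arguments raise {N}.

Definition pod_sets K k s : {set {set 'I_K}} :=
  [set A : {set 'I_K} | [&& pod_ed_set A, \sum_(i in A) (i : nat) == s & #|A| == k]].

Lemma card_pod_sets_succ N k s : odd k -> odd s -> s < N ->
  #|pod_sets N.+1 k s.+1| = #|pod_sets N.+1 k s|.
Proof.
move=> ok os sN.
have lowerP A : A \in pod_sets N.+1 k s.+1 -> lower A \in pod_sets N.+1 k s /\ raise (lower A) = A.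
  rewrite inE => /and3P [podA /eqP sumA /eqP cardA].
  have [x xA ox] : exists2 x, x \in A & ~~ odd x.
    by apply: even_part_exists; rewrite ?cardA ?sumA //= negbK.
  have [pod_l card_l sum_l ->] := lower_spec podA xA ox.
  by split=> //; rewrite inE pod_l card_l cardA -eqSS sum_l sumA !eqxx.
have raiseP B : B \in pod_sets N.+1 k s -> raise B \in pod_sets N.+1 k s.+1 /\ lower (raise B) = B.
  rewrite inE => /and3P [podB /eqP sumB /eqP cardB].
  have [x xB ox] : exists2 x, x \in B & odd x by apply: odd_part_exists; rewrite sumB.
  have sumB_lt : \sum_(i in B) (i : nat) < N by rewrite sumB.
  have [pod_r card_r sum_r ->] := raise_spec podB xB ox sumB_lt.
  by split=> //; rewrite inE pod_r card_r cardB sum_r sumB !eqxx.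
have lower_inj : {in pod_sets N.+1 k s.+1 &, injective lower}.
  by move=> A1 A2 /lowerP [_ rl1] /lowerP [_ rl2] eq_l; rewrite -rl1 -rl2 eq_l.
rewrite -(card_in_imset lower_inj); apply: eq_card => B.
apply/imsetP/idP => [[A /lowerP [] ? _ ->]//|sB].
by have [rB lrB] := raiseP B sB; exists (raise B).
Qed.

Section Widen.
Variables (K K' : nat) (le_KK' : K <= K').
Local Notation w := (widen_ord le_KK').

Lemma w_inj : injective w.
Proof. by move=> a b /(congr1 val) /= eq_ab; apply: val_inj. Qed.

Lemma widen_pod_sets k s (A : {set 'I_K}) :
  (w @: A \in pod_sets K' k s) = (A \in pod_sets K k s).
Proof.
rewrite !inE (card_imset _ w_inj) big_imset /=; last by move=> ? ? _ _; apply: w_inj.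
congr andb; apply/podP/podP => [[pos ord]|[pos ord]]; split.
- by move=> i iA; apply: (pos (w i)); apply: imset_f.
- by move=> e o eA oA; apply: (ord (w e) (w o)); apply: imset_f.
- by move=> i /imsetP [j jA ->]; apply: pos.
- by move=> e o /imsetP [e1 eA ->] /imsetP [o1 oA ->]; apply: ord.
Qed.

Lemma widen_preimK (B : {set 'I_K'}) :
  {in B, forall x : 'I_K', x < K} -> w @: (w @^-1: B) = B.
Proof.
move=> small; apply/setP => x; apply/imsetP/idP => [[i]|xB]; first by rewrite inE => ? ->.
have wx : w (Ordinal (small x xB)) = x by apply: val_inj.
by exists (Ordinal (small x xB)); rewrite ?inE wx.
Qed.

(* Every set counted in 'I_K' has parts below K, so comes from 'I_K. *)
Lemma card_pod_sets_widen k s : s < K -> #|pod_sets K k s| = #|pod_sets K' k s|.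
Proof.
move=> sK; rewrite -(card_imset _ (imset_inj w_inj)); apply: eq_card => B.
apply/imsetP/idP => [[A sA ->]|sB]; first by rewrite widen_pod_sets.
have small : {in B, forall x : 'I_K', x < K}.
  move=> x xB; move: sB; rewrite inE => /and3P [_ /eqP sumB _].
  by apply: leq_ltn_trans sK; rewrite -sumB part_le_sum.
by exists (w @^-1: B); rewrite -?widen_pod_sets widen_preimK.
Qed.
End Widen.

Theorem mainTheorem3 (m n : nat) (hm : 1 <= m) (hn : 1 <= n) :
  p_od_ed (2 * m - 1) (2 * n) = p_od_ed (2 * m - 1) (2 * n - 1).
Proof.
have odd_k : odd (2 * m - 1) by rewrite oddB ?odd_mul //; lia.
have odd_s : odd (2 * n - 1) by rewrite oddB ?odd_mul //; lia.
have def_2n : 2 * n = (2 * n - 1).+1 by lia.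
rewrite /p_od_ed -!/(pod_sets _ _ _) [in LHS]def_2n.
rewrite (card_pod_sets_succ odd_k odd_s) ?leqnn //.
by rewrite -(card_pod_sets_widen (leqnSn _)).
Qed.
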